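(* Let $0<\varepsilon<1$ and $\Omega_\varepsilon=\{\lambda\in\mathbb C : |\mathrm{Re}\,\lambda|\le\varepsilon|\lambda|,\ \mathrm{Im}\,\lambda\le-\tfrac{1-\varepsilon}{2}\}$. Then there exists a constant $d>0$ and, for every $h\in\mathbb N$, a constant $C>0$ such that $$|\partial_\lambda^{\,h}\Gamma_\ell(\lambda)|\le C\,\ell^{d}\,(1+|\lambda|)^{-h-1}\qquad\text{for all }\ell\in\mathbb N^*=\{1,2,\dots\},\ \lambda\in\mathbb C\setminus\Omega_\varepsilon .$$
   Context: Let $m\ge2$ be an even integer and $k\ge1$ an integer, and set $Q=\frac m2+k$. Define $$\omega(r)=\tfrac14\cdot\tfrac m2\,(Q-1)\,\big(\sinh\tfrac r2\big)^{-2}+\tfrac k2\big(\tfrac k2-1\big)(\sinh r)^{-2}\qquad(r>0).$$ This function has an expansion $\omega(r)=\sum_{j\ge1}\omega_j e^{-jr}$ for $r>0$, with coefficients satisfying $\omega_j=O(j)$. The functions $\Gamma_\ell(\lambda)$, for $\ell\in\mathbb N$, are defined by the recurrence $$\Gamma_0=1,\qquad \ell\,(\ell-2i\lambda)\,\Gamma_\ell(\lambda)=\sum_{j=0}^{\ell-1}\omega_{\ell-j}\,\Gamma_j(\lambda)\qquad(\ell\ge1).$$ These are the coefficients in the expansion of the spherical function at infinity on a Damek–Ricci space: the poles of $\Gamma_\ell$ lie at $\lambda=-i\ell'/2$ for $\ell'\ge1$. *)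

From Stdlib Require Import Reals Lra Lia Arith List ClassicalEpsilon.
Import ListNotations.
Open Scope R_scope.

Definition Cplx : Type := (R * R)%type.
Definition Re (z : Cplx) : R := fst z.
Definition Im (z : Cplx) : R := snd z.
Definition C0 : Cplx := (0, 0).
Definition C1 : Cplx := (1, 0).
Definition RtoC (x : R) : Cplx := (x, 0).
Definition Ci : Cplx := (0, 1).
Definition Cadd (z w : Cplx) : Cplx := (Re z + Re w, Im z + Im w).
Definition Copp (z : Cplx) : Cplx := (- Re z, - Im z).
Definition Csub (z w : Cplx) : Cplx := Cadd z (Copp w).
Definition Cmul (z w : Cplx) : Cplx :=
  (Re z * Re w - Im z * Im w, Re z * Im w + Im z * Re w).
Definition Cnorm (z : Cplx) : R := sqrt (Re z * Re z + Im z * Im z).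
Definition Cinv (z : Cplx) : Cplx :=
  (Re z / (Re z * Re z + Im z * Im z), - Im z / (Re z * Re z + Im z * Im z)).
Definition Cdiv (z w : Cplx) : Cplx := Cmul z (Cinv w).

Definition has_cderiv (f : Cplx -> Cplx) (z l : Cplx) : Prop :=
  forall eps, 0 < eps -> exists delta, 0 < delta /\
    forall w, 0 < Cnorm w < delta ->
      Cnorm (Csub (Cdiv (Csub (f (Cadd z w)) (f z)) w) l) < eps.

(* the complex derivative (the limit, when it exists; it is unique) *)
Definition cderiv (f : Cplx -> Cplx) (z : Cplx) : Cplx :=
  epsilon (inhabits C0) (fun (l : Cplx) => has_cderiv f z l).

Fixpoint cderivn (h : nat) (f : Cplx -> Cplx) : Cplx -> Cplx :=
  match h with
  | O => f
  | S h' => cderiv (cderivn h' f)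
  end.

Definition Qdim (m k : nat) : R := INR m / 2 + INR k.
Definition omega_fun (m k : nat) (r : R) : R :=
  / 4 * (INR m / 2) * (Qdim m k - 1) * / (sinh (r / 2) ^ 2)
  + (INR k / 2) * (INR k / 2 - 1) * / (sinh r ^ 2).

Definition is_expansion (m k : nat) (om : nat -> R) : Prop :=
  forall r, 0 < r ->
    infinite_sum (fun n => om (S n) * exp (- INR (S n) * r)) (omega_fun m k r).

(* Gamma_list om lam n = [Gamma_0 lam; ...; Gamma_n lam], via
   Gamma_0 = 1,  l (l - 2 i lam) Gamma_l = sum_{j=0}^{l-1} om_{l-j} Gamma_j. *)
Fixpoint Gamma_list (om : nat -> R) (lam : Cplx) (n : nat) : list Cplx :=
  match n with
  | O => [C1]
  | S n' =>
      let prev := Gamma_list om lam n' in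
      let l := INR (S n') in
      let s := fold_right Cadd C0
                 (map (fun j => Cmul (RtoC (om (S n' - j)%nat)) (nth j prev C0))
                      (seq 0 (S n'))) in
      prev ++ [Cdiv s (Cmul (RtoC l) (Csub (RtoC l) (Cmul (RtoC 2) (Cmul Ci lam))))]
  end.

Definition Gamma (om : nat -> R) (l : nat) (lam : Cplx) : Cplx :=
  nth l (Gamma_list om lam l) C0.

Definition Omega (eps : R) (lam : Cplx) : Prop :=
  Rabs (Re lam) <= eps * Cnorm lam /\ Im lam <= - ((1 - eps) / 2).

(* Differentiating the recurrence h times gives, away from the poles,
     D_l Γ_l^(h) = Σ_{j<l} ω_{l-j} Γ_j^(h) + 2 i l h Γ_l^(h-1),   D_l(λ) = l (l - 2 i λ),
   and outside Ω_ε one has |D_l(λ)| ≥ (ε/4) l (l + |λ|).  Comparing the expansion of ω with the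
   series Σ n x^n = x/(1-x)^2 identifies ω_n = (α+γ) n + γ n (-1)^n, so |ω_n| ≤ A n.  Choose d
   with (d+1) ε/4 ≥ 2A.  Then |Γ_l^(h)(λ)| ≤ C_h l^d (1+|λ|)^(-h-1) follows by induction on h and
   on l: since Σ_{j<l} j^d ≤ l^(d+1)/(d+1), the terms with 1 ≤ j < l cost at most half of |D_l|,
   and the terms with Γ_0^(h) and Γ_l^(h-1) fit in the other half once C_h is large. *)

From Pilot Require Import Defs.
From Stdlib Require Import Reals Lra Lia Psatz Arith List Field ClassicalEpsilon.
Import ListNotations.
(* Re-imported so that [C1] denotes the complex unit, not the homonymous constant of [Reals]. *)
Import Pilot.Defs.
Open Scope R_scope.

Lemma Cplx_eq (z w : Cplx) : Re z = Re w -> Im z = Im w -> z = w.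
Proof. destruct z, w; simpl; intros; subst; reflexivity. Qed.

Lemma Cplx_ring : ring_theory C0 C1 Cadd Cmul Csub Copp (@eq Cplx).
Proof.
  constructor; intros; apply Cplx_eq; destruct x; try destruct y; try destruct z;
  unfold Cadd, Cmul, Csub, Copp, C0, C1, Re, Im; simpl; ring.
Qed.

Lemma Cplx_field : field_theory C0 C1 Cadd Cmul Csub Copp Cdiv Cinv (@eq Cplx).
Proof.
  constructor.
  - exact Cplx_ring.
  - unfold C0, C1; intro H; inversion H; lra.
  - reflexivity.
  - intros [a b] Hz.
    assert (a * a + b * b <> 0).
    { intro H0. apply Hz. assert (a = 0) by nra. assert (b = 0) by nra. subst. reflexivity. }
    apply Cplx_eq; unfold Cinv, Cmul, C1, Re, Im; simpl; field; auto.
Qed.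

Add Field Cfield : Cplx_field.

Lemma RtoC_add a b : RtoC (a + b) = Cadd (RtoC a) (RtoC b).
Proof. apply Cplx_eq; unfold RtoC, Cadd, Re, Im; simpl; ring. Qed.

Lemma RtoC_mul a b : RtoC (a * b) = Cmul (RtoC a) (RtoC b).
Proof. apply Cplx_eq; unfold RtoC, Cmul, Re, Im; simpl; ring. Qed.

Lemma Cnorm_ge0 z : 0 <= Cnorm z.
Proof. apply sqrt_pos. Qed.

Lemma Cnorm_sq z : Cnorm z * Cnorm z = Re z * Re z + Im z * Im z.
Proof. unfold Cnorm. apply sqrt_sqrt. nra. Qed.

Lemma Cnorm_mul z w : Cnorm (Cmul z w) = Cnorm z * Cnorm w.
Proof.
  unfold Cnorm. rewrite <- sqrt_mult by nra. f_equal.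
  destruct z, w; unfold Cmul, Re, Im; simpl; ring.
Qed.

Lemma Cnorm_RtoC x : Cnorm (RtoC x) = Rabs x.
Proof.
  unfold Cnorm, RtoC, Re, Im; simpl. rewrite <- sqrt_Rsqr_abs. unfold Rsqr. f_equal; ring.
Qed.

Lemma Cnorm_C0 : Cnorm C0 = 0.
Proof. change C0 with (RtoC 0). rewrite Cnorm_RtoC. apply Rabs_R0. Qed.

Lemma Cnorm_C1 : Cnorm C1 = 1.
Proof. change C1 with (RtoC 1). rewrite Cnorm_RtoC. apply Rabs_R1. Qed.

Lemma Cnorm_Ci : Cnorm Ci = 1.
Proof. unfold Cnorm, Ci, Re, Im; simpl. replace (0 * 0 + 1 * 1) with 1 by ring. apply sqrt_1. Qed.

Lemma Rabs_Re_le_Cnorm z : Rabs (Re z) <= Cnorm z.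
Proof. unfold Cnorm. rewrite <- sqrt_Rsqr_abs. apply sqrt_le_1_alt. unfold Rsqr. nra. Qed.

Lemma Rabs_Im_le_Cnorm z : Rabs (Im z) <= Cnorm z.
Proof. unfold Cnorm. rewrite <- sqrt_Rsqr_abs. apply sqrt_le_1_alt. unfold Rsqr. nra. Qed.

Lemma Cnorm_le_Rabs_Re_Im z : Cnorm z <= Rabs (Re z) + Rabs (Im z).
Proof.
  pose proof (Rabs_pos (Re z)); pose proof (Rabs_pos (Im z)).
  pose proof (pow2_abs (Re z)); pose proof (pow2_abs (Im z)).
  unfold Cnorm. rewrite <- (sqrt_Rsqr (Rabs (Re z) + Rabs (Im z))) by lra.
  apply sqrt_le_1_alt. unfold Rsqr. nra.
Qed.

Lemma Cnorm_triangle z w : Cnorm (Cadd z w) <= Cnorm z + Cnorm w.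
Proof.
  pose proof (Cnorm_ge0 z); pose proof (Cnorm_ge0 w); pose proof (Cnorm_ge0 (Cadd z w)).
  pose proof (Cnorm_sq z); pose proof (Cnorm_sq w); pose proof (Cnorm_sq (Cadd z w)).
  destruct z as [a b], w as [c d]. unfold Cadd, Re, Im in *; simpl in *.
  assert (CS : a * c + b * d <= Cnorm (a, b) * Cnorm (c, d)).
  { assert ((a * c + b * d) ^ 2 <= (Cnorm (a, b) * Cnorm (c, d)) ^ 2).
    { replace ((Cnorm (a, b) * Cnorm (c, d)) ^ 2)
        with (Cnorm (a, b) * Cnorm (a, b) * (Cnorm (c, d) * Cnorm (c, d))) by ring.
      rewrite H2, H3. pose proof (pow2_ge_0 (a * d - b * c)). nra. }
    pose proof (Rmult_le_pos _ _ H H0). nra. }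
  nra.
Qed.

Lemma Cnorm_opp z : Cnorm (Copp z) = Cnorm z.
Proof. unfold Cnorm, Copp, Re, Im; simpl. f_equal; ring. Qed.

Lemma Cnorm_sub_le z w : Cnorm (Csub z w) <= Cnorm z + Cnorm w.
Proof. unfold Csub. rewrite <- (Cnorm_opp w). apply Cnorm_triangle. Qed.

Lemma Cnorm_eq0 z : Cnorm z = 0 -> z = C0.
Proof.
  intro H. pose proof (Cnorm_sq z). rewrite H in H0.
  apply Cplx_eq; unfold C0, Re, Im in *; simpl; nra.
Qed.

Lemma Cnorm_gt0 z : z <> C0 -> 0 < Cnorm z.
Proof. intro H. destruct (Cnorm_ge0 z); auto. exfalso; apply H, Cnorm_eq0; auto. Qed.

Lemma Cnorm_gt0_neq0 z : 0 < Cnorm z -> z <> C0.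
Proof. intros H E; subst; rewrite Cnorm_C0 in H; lra. Qed.

Lemma Cnorm_inv z : z <> C0 -> Cnorm (Cinv z) = / Cnorm z.
Proof.
  intro H. pose proof (Cnorm_gt0 z H).
  assert (Cnorm (Cinv z) * Cnorm z = 1).
  { rewrite <- Cnorm_mul. replace (Cmul (Cinv z) z) with C1 by (field; auto). apply Cnorm_C1. }
  field_simplify_eq; lra.
Qed.

Lemma Cnorm_div z w : w <> C0 -> Cnorm (Cdiv z w) = Cnorm z / Cnorm w.
Proof. intro H. unfold Cdiv. rewrite Cnorm_mul, Cnorm_inv; auto. Qed.
Definition near0 (P : Cplx -> Prop) : Prop :=
  exists d, 0 < d /\ forall w, Cnorm w < d -> P w.

Lemma near0_ball r : 0 < r -> near0 (fun w => Cnorm w < r).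
Proof. intro Hr. exists r. auto. Qed.

Lemma near0_and (P Q : Cplx -> Prop) : near0 P -> near0 Q -> near0 (fun w => P w /\ Q w).
Proof.
  intros [d1 [H1 P1]] [d2 [H2 P2]]. exists (Rmin d1 d2). split.
  - apply Rmin_glb_lt; auto.
  - intros w Hw. split; [apply P1 | apply P2];
      [apply Rlt_le_trans with (1 := Hw); apply Rmin_l | apply Rlt_le_trans with (1 := Hw); apply Rmin_r].
Qed.

Lemma near0_impl (P Q : Cplx -> Prop) : near0 P -> (forall w, P w -> Q w) -> near0 Q.
Proof. intros [d [Hd HP]] H. exists d. auto. Qed.

Definition is_littleo (r : Cplx -> Cplx) : Prop :=
  forall e, 0 < e -> near0 (fun w => Cnorm (r w) <= e * Cnorm w).

Lemma is_littleo_ext r s : (forall w, r w = s w) -> is_littleo s -> is_littleo r.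
Proof.
  intros E H e He. apply (near0_impl _ _ (H e He)). intros w. rewrite E. auto.
Qed.

Lemma is_littleo_add r s : is_littleo r -> is_littleo s -> is_littleo (fun w => Cadd (r w) (s w)).
Proof.
  intros Hr Hs e He.
  apply (near0_impl _ _ (near0_and _ _ (Hr (e / 2) ltac:(lra)) (Hs (e / 2) ltac:(lra)))).
  intros w [H1 H2]. eapply Rle_trans; [apply Cnorm_triangle | lra].
Qed.

Lemma is_littleo_mul_bounded r b M : 0 < M ->
  is_littleo r -> near0 (fun w => Cnorm (b w) <= M) -> is_littleo (fun w => Cmul (r w) (b w)).
Proof.
  intros HM Hr Hb e He.
  apply (near0_impl _ _ (near0_and _ _ (Hr (e / M) ltac:(apply Rdiv_lt_0_compat; lra)) Hb)).
  intros w [H1 H2]. rewrite Cnorm_mul.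
  pose proof (Cnorm_ge0 (r w)); pose proof (Cnorm_ge0 w).
  replace (e * Cnorm w) with (e / M * Cnorm w * M) by (field; lra).
  apply Rmult_le_compat; auto. apply Cnorm_ge0.
Qed.

Lemma is_littleo_quadratic r K : 0 < K ->
  near0 (fun w => Cnorm (r w) <= K * (Cnorm w * Cnorm w)) -> is_littleo r.
Proof.
  intros HK Hr e He.
  apply (near0_impl _ _ (near0_and _ _ Hr (near0_ball (e / K) ltac:(apply Rdiv_lt_0_compat; lra)))).
  intros w [H1 H2]. pose proof (Cnorm_ge0 w).
  assert (K * Cnorm w <= e) by (apply Rlt_le in H2; unfold Rdiv in H2;
    apply Rmult_le_compat_l with (r := K) in H2; [field_simplify in H2; lra | lra]).
  nra.
Qed.

(* [has_cderiv] phrased through the remainder, so that the calculus rules below compose. *)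
Definition is_cderiv (f : Cplx -> Cplx) (z l : Cplx) : Prop :=
  is_littleo (fun w => Csub (Csub (f (Cadd z w)) (f z)) (Cmul l w)).

Lemma is_cderiv_has_cderiv f z l : is_cderiv f z l -> has_cderiv f z l.
Proof.
  intros H e He. destruct (H (e / 2) ltac:(lra)) as [d [Hd Hw]].
  exists d; split; auto. intros w [H1 H2].
  pose proof (Cnorm_gt0_neq0 w H1) as Hw0.
  replace (Csub (Cdiv (Csub (f (Cadd z w)) (f z)) w) l)
    with (Cdiv (Csub (Csub (f (Cadd z w)) (f z)) (Cmul l w)) w) by (field; auto).
  rewrite Cnorm_div by auto.
  specialize (Hw w H2). apply (Rmult_lt_reg_r (Cnorm w)); auto.
  unfold Rdiv. rewrite Rmult_assoc, Rinv_l by lra. nra.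
Qed.

Lemma has_cderiv_unique f z l1 l2 : has_cderiv f z l1 -> has_cderiv f z l2 -> l1 = l2.
Proof.
  intros H1 H2. destruct (Req_dec (Cnorm (Csub l1 l2)) 0) as [E|E].
  { apply Cnorm_eq0 in E. replace l1 with (Cadd (Csub l1 l2) l2) by ring. rewrite E; ring. }
  pose proof (Cnorm_ge0 (Csub l1 l2)).
  set (e := Cnorm (Csub l1 l2) / 2).
  destruct (H1 e) as [d1 [Hd1 P1]]; [unfold e; lra|].
  destruct (H2 e) as [d2 [Hd2 P2]]; [unfold e; lra|].
  set (w := RtoC (Rmin d1 d2 / 2)).
  assert (Hm : 0 < Rmin d1 d2) by (apply Rmin_glb_lt; auto).
  assert (Hw : Cnorm w = Rmin d1 d2 / 2) by (unfold w; rewrite Cnorm_RtoC; apply Rabs_right; lra).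
  pose proof (Rmin_l d1 d2); pose proof (Rmin_r d1 d2).
  specialize (P1 w ltac:(lra)). specialize (P2 w ltac:(lra)).
  set (q := Cdiv (Csub (f (Cadd z w)) (f z)) w) in *.
  pose proof (Cnorm_sub_le (Csub q l2) (Csub q l1)) as T.
  replace (Csub (Csub q l2) (Csub q l1)) with (Csub l1 l2) in T by ring.
  unfold e in *. lra.
Qed.

Lemma cderiv_unique f z l : is_cderiv f z l -> cderiv f z = l.
Proof.
  intro H. apply is_cderiv_has_cderiv in H.
  apply has_cderiv_unique with f z; auto.
  unfold cderiv. apply epsilon_spec. exists l; auto.
Qed.

Lemma is_cderiv_local f g z l :
  near0 (fun w => f (Cadd z w) = g (Cadd z w)) -> is_cderiv g z l -> is_cderiv f z l.
Proof.
  intros [rho [Hrho E]] H e He.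
  assert (Ez : f z = g z) by (replace z with (Cadd z C0) by ring; apply E; rewrite Cnorm_C0; lra).
  apply (near0_impl _ _ (near0_and _ _ (H e He) (near0_ball rho Hrho))).
  intros w [H1 H2]. rewrite Ez, E by auto. exact H1.
Qed.

Lemma is_cderiv_ext f g z l : (forall x, f x = g x) -> is_cderiv g z l -> is_cderiv f z l.
Proof.
  intro E. apply is_cderiv_local. exists 1. split; [lra | auto].
Qed.

Lemma is_cderiv_near_lipschitz f z l : is_cderiv f z l ->
  near0 (fun w => Cnorm (Csub (f (Cadd z w)) (f z)) <= (Cnorm l + 1) * Cnorm w).
Proof.
  intro H. apply (near0_impl _ _ (H 1 ltac:(lra))). intros w Hw.
  replace (Csub (f (Cadd z w)) (f z)) with
    (Cadd (Csub (Csub (f (Cadd z w)) (f z)) (Cmul l w)) (Cmul l w)) by ring.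
  eapply Rle_trans. apply Cnorm_triangle. rewrite Cnorm_mul. lra.
Qed.

Lemma is_cderiv_const c z : is_cderiv (fun _ => c) z C0.
Proof.
  apply is_littleo_quadratic with 1; [lra|]. exists 1. split; [lra|]. intros w _.
  replace (Csub (Csub c c) (Cmul C0 w)) with C0 by ring. rewrite Cnorm_C0.
  pose proof (Cnorm_ge0 w). nra.
Qed.

Lemma is_cderiv_add f g z a b : is_cderiv f z a -> is_cderiv g z b ->
  is_cderiv (fun x => Cadd (f x) (g x)) z (Cadd a b).
Proof.
  intros Hf Hg. eapply is_littleo_ext; [|exact (is_littleo_add _ _ Hf Hg)].
  intro w. cbv beta. ring.
Qed.

Lemma is_cderiv_mul f g z a b : is_cderiv f z a -> is_cderiv g z b ->
  is_cderiv (fun x => Cmul (f x) (g x)) z (Cadd (Cmul a (g z)) (Cmul (f z) b)).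
Proof.
  intros Hf Hg.
  set (Mg := Cnorm (g z) + Cnorm b + 1).
  assert (HMg : 0 < Mg) by (unfold Mg; pose proof (Cnorm_ge0 (g z)); pose proof (Cnorm_ge0 b); lra).
  assert (Hg_near : near0 (fun w => Cnorm (g (Cadd z w)) <= Mg)).
  { apply (near0_impl _ _ (near0_and _ _ (is_cderiv_near_lipschitz g z b Hg) (near0_ball 1 ltac:(lra)))).
    intros w [H1 H2]. pose proof (Cnorm_ge0 w); pose proof (Cnorm_ge0 b).
    replace (g (Cadd z w)) with (Cadd (Csub (g (Cadd z w)) (g z)) (g z)) by ring.
    assert ((Cnorm b + 1) * Cnorm w <= Cnorm b + 1) by (apply Rlt_le, Rmult_le_compat_l with (r := Cnorm b + 1) in H2; lra).
    eapply Rle_trans; [apply Cnorm_triangle|]. unfold Mg. lra. }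
  assert (Hquad : is_littleo (fun w => Cmul (Cmul a w) (Csub (g (Cadd z w)) (g z)))).
  { apply is_littleo_quadratic with ((Cnorm a + 1) * (Cnorm b + 1));
      [pose proof (Cnorm_ge0 a); pose proof (Cnorm_ge0 b); nra|].
    apply (near0_impl _ _ (is_cderiv_near_lipschitz g z b Hg)). intros w Hw.
    rewrite !Cnorm_mul. pose proof (Cnorm_ge0 a); pose proof (Cnorm_ge0 w).
    apply Rle_trans with (Cnorm a * Cnorm w * ((Cnorm b + 1) * Cnorm w));
      [apply Rmult_le_compat_l; [nra | exact Hw] |].
    pose proof (Cnorm_ge0 b).
    assert (0 <= (Cnorm b + 1) * (Cnorm w * Cnorm w)) by (apply Rmult_le_pos; nra).
    nra. }
  assert (Hfz : is_littleo (fun w => Cmul (Csub (Csub (g (Cadd z w)) (g z)) (Cmul b w)) (f z))).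
  { apply is_littleo_mul_bounded with (Cnorm (f z) + 1); auto.
    - pose proof (Cnorm_ge0 (f z)); lra.
    - exists 1. split; [lra|]. intros; lra. }
  eapply is_littleo_ext;
    [|exact (is_littleo_add _ _ (is_littleo_add _ _ (is_littleo_mul_bounded _ _ _ HMg Hf Hg_near) Hquad) Hfz)].
  intro w. cbv beta. ring.
Qed.

Lemma is_cderiv_scal c f z a : is_cderiv f z a -> is_cderiv (fun x => Cmul c (f x)) z (Cmul c a).
Proof.
  intro H. pose proof (is_cderiv_mul (fun _ => c) f z C0 a (is_cderiv_const c z) H) as Hm.
  replace (Cmul c a) with (Cadd (Cmul C0 (f z)) (Cmul c a)) by ring. exact Hm.
Qed.

Lemma is_cderiv_inv_affine p c z : Cadd p (Cmul c z) <> C0 ->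
  is_cderiv (fun x => Cinv (Cadd p (Cmul c x))) z
    (Copp (Cmul c (Cmul (Cinv (Cadd p (Cmul c z))) (Cinv (Cadd p (Cmul c z)))))).
Proof.
  intros Hg. set (g := Cadd p (Cmul c z)) in *.
  pose proof (Cnorm_gt0 g Hg) as Pg.
  set (Mc := Cnorm c). assert (0 <= Mc) by apply Cnorm_ge0.
  assert (Hsmall : near0 (fun w => Cnorm g / 2 <= Cnorm (Cadd g (Cmul c w)))).
  { apply (near0_impl _ _ (near0_ball (Cnorm g / (2 * (Mc + 1)))
      ltac:(apply Rdiv_lt_0_compat; lra))).
    intros w Hw. pose proof (Cnorm_ge0 w).
    assert (Mc * Cnorm w <= Cnorm g / 2).
    { apply Rmult_lt_compat_l with (r := 2 * (Mc + 1)) in Hw; [|lra].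
      field_simplify in Hw; nra. }
    pose proof (Cnorm_sub_le (Cadd g (Cmul c w)) (Cmul c w)) as T.
    rewrite Cnorm_mul in T. replace (Csub (Cadd g (Cmul c w)) (Cmul c w)) with g in T by ring.
    fold Mc in T. lra. }
  apply is_littleo_quadratic with (Mc * Mc * 2 / (Cnorm g * Cnorm g * Cnorm g) + 1).
  { assert (0 <= Mc * Mc * 2 / (Cnorm g * Cnorm g * Cnorm g))
      by (apply Rmult_le_pos; [nra | left; apply Rinv_0_lt_compat; repeat apply Rmult_lt_0_compat; lra]). lra. }
  apply (near0_impl _ _ Hsmall). intros w Hw.
  replace (Cadd p (Cmul c (Cadd z w))) with (Cadd g (Cmul c w)) by (unfold g; ring).
  assert (Hg' : Cadd g (Cmul c w) <> C0) by (apply Cnorm_gt0_neq0; lra).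
  fold g. replace (Csub (Csub (Cinv (Cadd g (Cmul c w))) (Cinv g)) (Cmul (Copp (Cmul c (Cmul (Cinv g) (Cinv g)))) w))
    with (Cmul (Cmul (Cmul c c) (Cmul (Cinv g) (Cinv g))) (Cmul (Cinv (Cadd g (Cmul c w))) (Cmul w w)))
    by (field; split; auto).
  rewrite !Cnorm_mul, !Cnorm_inv by auto. fold Mc.
  set (N := Cnorm (Cadd g (Cmul c w))) in *. set (G := Cnorm g) in *.
  set (nw := Cnorm w). assert (0 <= nw) by apply Cnorm_ge0.
  assert (/ N <= 2 / G) by (replace (2 / G) with (/ (G / 2)) by (field; lra); apply Rinv_le_contravar; lra).
  assert (0 <= Mc * Mc * (/ G * / G)) by (apply Rmult_le_pos; [nra | apply Rlt_le, Rmult_lt_0_compat; apply Rinv_0_lt_compat; lra]).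
  assert (E : Mc * Mc * 2 / (G * G * G) = Mc * Mc * (/ G * / G) * (2 / G)) by (field; lra).
  rewrite Rmult_plus_distr_r, E. rewrite Rmult_1_l.
  assert (Mc * Mc * (/ G * / G) * (/ N * (nw * nw)) <= Mc * Mc * (/ G * / G) * (2 / G * (nw * nw))).
  { apply Rmult_le_compat_l; auto. apply Rmult_le_compat_r; nra. }
  nra.
Qed.

Lemma is_cderiv_fold_sum (f f' : nat -> Cplx -> Cplx) z (js : list nat) :
  (forall j, In j js -> is_cderiv (f j) z (f' j z)) ->
  is_cderiv (fun x => fold_right Cadd C0 (map (fun j => f j x) js)) z
    (fold_right Cadd C0 (map (fun j => f' j z) js)).
Proof.
  induction js as [|j js IH]; intro H; simpl.
  - apply is_cderiv_const.
  - apply (is_cderiv_add (f j) (fun x => fold_right Cadd C0 (map (fun j => f j x) js))).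
    + apply H; simpl; auto.
    + apply IH. intros; apply H; simpl; auto.
Qed.

Definition denom (l : nat) (z : Cplx) : Cplx :=
  Cmul (RtoC (INR l)) (Csub (RtoC (INR l)) (Cmul (RtoC 2) (Cmul Ci z))).

Lemma Gamma_list_length om z n : length (Gamma_list om z n) = S n.
Proof. induction n; simpl; auto. rewrite length_app, IHn; simpl; lia. Qed.

Lemma nth_Gamma_list om z n j : (j <= n)%nat -> nth j (Gamma_list om z n) C0 = Gamma om j z.
Proof.
  intro H. unfold Gamma. induction n.
  - assert (j = 0%nat) by lia; subst; reflexivity.
  - destruct (Nat.eq_dec j (S n)) as [E|E]; [subst; reflexivity|].
    simpl Gamma_list at 1. rewrite app_nth1 by (rewrite Gamma_list_length; lia). apply IHn; lia.
Qed.

Lemma Gamma_succ om n z : Gamma om (S n) z =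
  Cdiv (fold_right Cadd C0 (map (fun j => Cmul (RtoC (om (S n - j)%nat)) (Gamma om j z)) (seq 0 (S n))))
       (denom (S n) z).
Proof.
  unfold Gamma at 1.
  change (Gamma_list om z (S n)) with (Gamma_list om z n ++
    [Cdiv (fold_right Cadd C0 (map (fun j => Cmul (RtoC (om (S n - j)%nat))
       (nth j (Gamma_list om z n) C0)) (seq 0 (S n)))) (denom (S n) z)]).
  rewrite app_nth2 by (rewrite Gamma_list_length; lia). rewrite Gamma_list_length, Nat.sub_diag.
  match goal with |- nth 0 [?x] _ = _ => change (nth 0 [x] C0) with x end.
  f_equal. f_equal. apply map_ext_in. intros j Hj. apply in_seq in Hj.
  rewrite nth_Gamma_list by lia. reflexivity.
Qed.

(* The zeros of [denom l], l >= 1, are the points -i l/2; all of them lie outside this set. *)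
Definition off_poles (z : Cplx) : Prop := Re z <> 0 \/ - / 2 < Im z.

Lemma off_poles_near z : off_poles z -> near0 (fun w => off_poles (Cadd z w)).
Proof.
  intros [H|H].
  - apply (near0_impl _ _ (near0_ball (Rabs (Re z)) (Rabs_pos_lt _ H))).
    intros w Hw. left. pose proof (Rabs_Re_le_Cnorm w).
    unfold Cadd, Re at 1; simpl. intro E.
    assert (Re w = - Re z) by (unfold Re in *; lra).
    rewrite H1, Rabs_Ropp in H0. lra.
  - apply (near0_impl _ _ (near0_ball (Im z + / 2) ltac:(lra))).
    intros w Hw. right. pose proof (Rabs_Im_le_Cnorm w).
    pose proof (Rle_abs (- Im w)). rewrite Rabs_Ropp in H1.
    unfold Cadd, Im at 1; simpl. unfold Im in *. lra.
Qed.

Lemma denom_factor_Re l z : Re (Csub (RtoC (INR l)) (Cmul (RtoC 2) (Cmul Ci z))) = INR l + 2 * Im z.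
Proof. destruct z; unfold Csub, Cadd, Copp, Cmul, RtoC, Ci, Re, Im; simpl; ring. Qed.

Lemma denom_factor_Im l z : Im (Csub (RtoC (INR l)) (Cmul (RtoC 2) (Cmul Ci z))) = - 2 * Re z.
Proof. destruct z; unfold Csub, Cadd, Copp, Cmul, RtoC, Ci, Re, Im; simpl; ring. Qed.

Lemma denom_neq0 l z : (1 <= l)%nat -> off_poles z -> denom l z <> C0.
Proof.
  intros Hl Hz E. unfold denom in E.
  assert (HL : 1 <= INR l) by (apply (le_INR 1); auto).
  apply (f_equal Cnorm) in E. rewrite Cnorm_mul, Cnorm_RtoC, Cnorm_C0, Rabs_right in E by lra.
  assert (E0 : Csub (RtoC (INR l)) (Cmul (RtoC 2) (Cmul Ci z)) = C0)
    by (apply Cnorm_eq0; apply Rmult_integral in E; destruct E; [lra | auto]).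
  pose proof (denom_factor_Re l z); pose proof (denom_factor_Im l z).
  rewrite E0 in *. unfold C0, Re, Im in *; simpl in *.
  destruct Hz; unfold Re, Im in *; lra.
Qed.

Lemma cderivn_const_succ h c z : cderivn (S h) (fun _ => c) z = C0.
Proof.
  revert z. induction h as [|h IH]; intro z.
  - apply cderiv_unique, is_cderiv_const.
  - change (cderiv (cderivn (S h) (fun _ => c)) z = C0). apply cderiv_unique.
    apply is_cderiv_ext with (fun _ => C0); [exact IH | exact (is_cderiv_const C0 z)].
Qed.

Lemma is_cderiv_cderivn_const h c z :
  is_cderiv (cderivn h (fun _ => c)) z (cderivn (S h) (fun _ => c) z).
Proof.
  rewrite (cderivn_const_succ h c z). destruct h as [|h]; [exact (is_cderiv_const c z)|].
  apply is_cderiv_ext with (fun _ => C0);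
    [intro; apply cderivn_const_succ | exact (is_cderiv_const C0 z)].
Qed.

Section DerivedRecurrence.
Variable om : nat -> R.

Definition dGamma (l h : nat) : Cplx -> Cplx := cderivn h (Gamma om l).

Definition conv_sum (l h : nat) (z : Cplx) : Cplx :=
  fold_right Cadd C0 (map (fun j => Cmul (RtoC (om (l - j)%nat)) (dGamma j h z)) (seq 0 l)).

Definition shift_coef (l h : nat) : Cplx := Cmul (RtoC (2 * INR l * INR h)) Ci.

(* The identity [denom l * Gamma om l = conv_sum l 0] differentiated [h] times, using
   [d/dz denom l z = -2 i l]. *)
Definition satisfies_recurrence (h : nat) : Prop :=
  forall l z, (1 <= l)%nat -> off_poles z ->
    dGamma l h z =
    Cdiv (Cadd (conv_sum l h z) (Cmul (shift_coef l h) (dGamma l (pred h) z))) (denom l z).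

Definition differentiable_off_poles (h : nat) : Prop :=
  forall l z, off_poles z -> is_cderiv (dGamma l h) z (dGamma l (S h) z).

Lemma dGamma_0 h z : dGamma 0 h z = cderivn h (fun _ => C1) z.
Proof. reflexivity. Qed.

Lemma shift_coef_0 l : shift_coef l 0 = C0.
Proof. apply Cplx_eq; unfold shift_coef, RtoC, Cmul, Ci, C0, Re, Im; simpl; ring. Qed.

Lemma satisfies_recurrence_0 : satisfies_recurrence 0.
Proof.
  intros l z Hl _. destruct l as [|n]; [lia|].
  change (dGamma (S n) 0 z) with (Gamma om (S n) z). rewrite Gamma_succ, shift_coef_0.
  f_equal. replace (Cmul C0 (dGamma (S n) (pred 0) z)) with C0 by ring.
  transitivity (conv_sum (S n) 0 z); [reflexivity | ring].
Qed.

Lemma is_cderiv_dGamma_step h l z :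
  satisfies_recurrence h -> ((0 < h)%nat -> differentiable_off_poles (pred h)) ->
  (1 <= l)%nat -> off_poles z ->
  (forall j, (j < l)%nat -> is_cderiv (dGamma j h) z (dGamma j (S h) z)) ->
  is_cderiv (dGamma l h) z
    (Cdiv (Cadd (conv_sum l (S h) z) (Cmul (shift_coef l (S h)) (dGamma l h z))) (denom l z)).
Proof.
  intros Hrec Hdiff Hl Hz Hj.
  set (num := fun x => Cadd (conv_sum l h x) (Cmul (shift_coef l h) (dGamma l (pred h) x))).
  assert (Hnum : is_cderiv num z (Cadd (conv_sum l (S h) z) (Cmul (shift_coef l h) (dGamma l h z)))).
  { apply (is_cderiv_add (fun x => conv_sum l h x)
             (fun x => Cmul (shift_coef l h) (dGamma l (pred h) x))).
    - apply (is_cderiv_fold_sum (fun j x => Cmul (RtoC (om (l - j)%nat)) (dGamma j h x))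
               (fun j x => Cmul (RtoC (om (l - j)%nat)) (dGamma j (S h) x))).
      intros j Hin. apply in_seq in Hin. apply is_cderiv_scal, Hj. lia.
    - destruct h as [|h'].
      + rewrite shift_coef_0. replace (Cmul C0 (dGamma l 0 z)) with C0 by ring.
        apply is_cderiv_ext with (fun _ => C0); [intros; ring | apply is_cderiv_const].
      + apply is_cderiv_scal, (Hdiff ltac:(lia)), Hz. }
  set (p := Cmul (RtoC (INR l)) (RtoC (INR l))).
  set (c := Copp (Cmul (RtoC (INR l)) (Cmul (RtoC 2) Ci))).
  assert (Ed : forall x, denom l x = Cadd p (Cmul c x)) by (intros; unfold denom, p, c; ring).
  assert (Dz : denom l z <> C0) by (apply denom_neq0; auto).
  assert (Hinv : is_cderiv (fun x => Cinv (denom l x)) z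
                   (Copp (Cmul c (Cmul (Cinv (denom l z)) (Cinv (denom l z)))))).
  { apply is_cderiv_ext with (fun x => Cinv (Cadd p (Cmul c x))); [intros; rewrite Ed; auto|].
    rewrite Ed. apply is_cderiv_inv_affine. rewrite <- Ed; auto. }
  pose proof (is_cderiv_mul num (fun x => Cinv (denom l x)) z _ _ Hnum Hinv) as Hquot.
  replace (Cdiv (Cadd (conv_sum l (S h) z) (Cmul (shift_coef l (S h)) (dGamma l h z))) (denom l z))
    with (Cadd (Cmul (Cadd (conv_sum l (S h) z) (Cmul (shift_coef l h) (dGamma l h z)))
                     (Cinv (denom l z)))
               (Cmul (num z) (Copp (Cmul c (Cmul (Cinv (denom l z)) (Cinv (denom l z))))))).
  2: { replace (num z) with (Cmul (dGamma l h z) (denom l z))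
         by (rewrite (Hrec l z Hl Hz); unfold num; field; auto).
       unfold shift_coef, c.
       rewrite S_INR, !RtoC_mul, RtoC_add. change (RtoC 1) with C1. field. auto. }
  apply (is_cderiv_local (dGamma l h) (fun x => Cmul (num x) (Cinv (denom l x))) z); [|exact Hquot].
  apply (near0_impl _ _ (off_poles_near z Hz)). intros w Hw. rewrite Hrec; auto.
Qed.

Lemma differentiable_off_poles_of_recurrence h :
  satisfies_recurrence h -> ((0 < h)%nat -> differentiable_off_poles (pred h)) ->
  differentiable_off_poles h.
Proof.
  intros Hrec Hdiff l. induction l as [l IH] using (well_founded_induction lt_wf).
  intros z Hz. destruct l as [|l'].
  - exact (is_cderiv_cderivn_const h C1 z).
  - pose proof (is_cderiv_dGamma_step h (S l') z Hrec Hdiff ltac:(lia) Hz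
                  (fun j Hj => IH j Hj z Hz)) as H.
    unfold dGamma at 2. simpl cderivn. fold (dGamma (S l') h).
    rewrite (cderiv_unique _ _ _ H). exact H.
Qed.

Lemma satisfies_recurrence_succ h :
  satisfies_recurrence h -> ((0 < h)%nat -> differentiable_off_poles (pred h)) ->
  satisfies_recurrence (S h).
Proof.
  intros Hrec Hdiff l z Hl Hz. unfold dGamma at 1. simpl cderivn. fold (dGamma l h).
  apply cderiv_unique, is_cderiv_dGamma_step; auto.
  intros j _. apply differentiable_off_poles_of_recurrence; auto.
Qed.

Lemma dGamma_recurrence h : satisfies_recurrence h.
Proof.
  enough (H : satisfies_recurrence h /\ ((0 < h)%nat -> differentiable_off_poles (pred h)))
    by apply H.
  induction h as [|h [Hrec Hdiff]].
  - split; [apply satisfies_recurrence_0 | lia].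
  - split; [apply satisfies_recurrence_succ; auto|].
    intros _. apply differentiable_off_poles_of_recurrence; auto.
Qed.

End DerivedRecurrence.

Lemma not_Omega eps z : ~ Omega eps z ->
  eps * Cnorm z < Rabs (Re z) \/ - ((1 - eps) / 2) < Im z.
Proof.
  unfold Omega. intro H.
  destruct (Rle_dec (Rabs (Re z)) (eps * Cnorm z)); [|left; lra].
  destruct (Rle_dec (Im z) (- ((1 - eps) / 2))); [tauto | right; lra].
Qed.

Lemma not_Omega_off_poles eps z : 0 < eps < 1 -> ~ Omega eps z -> off_poles z.
Proof.
  intros He H. destruct (not_Omega eps z H) as [H1|H1].
  - left. intro E. rewrite E, Rabs_R0 in H1. pose proof (Cnorm_ge0 z). nra.
  - right. lra.
Qed.

Lemma denom_factor_lower_bound eps l z : 0 < eps < 1 -> (1 <= l)%nat -> ~ Omega eps z ->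
  eps / 4 * (INR l + Cnorm z) <= Cnorm (Csub (RtoC (INR l)) (Cmul (RtoC 2) (Cmul Ci z))).
Proof.
  intros He Hl HO.
  assert (HL : 1 <= INR l) by (apply (le_INR 1); auto).
  set (N := Cnorm (Csub (RtoC (INR l)) (Cmul (RtoC 2) (Cmul Ci z)))).
  assert (N1 : Rabs (INR l + 2 * Im z) <= N) by (rewrite <- (denom_factor_Re l z); apply Rabs_Re_le_Cnorm).
  assert (N2 : 2 * Rabs (Re z) <= N).
  { replace (2 * Rabs (Re z)) with (Rabs (- 2 * Re z))
      by (rewrite Rabs_mult, Rabs_left; lra).
    rewrite <- (denom_factor_Im l z). apply Rabs_Im_le_Cnorm. }
  pose proof (Cnorm_le_Rabs_Re_Im z). pose proof (Rabs_Re_le_Cnorm z).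
  pose proof (Rabs_Im_le_Cnorm z). pose proof (Rabs_pos (Re z)).
  pose proof (Rle_abs (INR l + 2 * Im z)). pose proof (Rle_abs (- (INR l + 2 * Im z))).
  rewrite Rabs_Ropp in *.
  destruct (Rle_dec 0 (Im z)).
  - rewrite (Rabs_right (Im z)) in * by lra.
    assert (eps * (INR l + Cnorm z) <= INR l + Cnorm z) by nra. lra.
  - rewrite (Rabs_left (Im z)) in * by lra.
    destruct (not_Omega eps z HO) as [A|B].
    + destruct (Rle_dec (INR l / 4) (Cnorm z)).
      * assert (0 <= eps * (7 * Cnorm z - INR l)) by (apply Rmult_le_pos; lra). lra.
      * assert (eps * (INR l + Cnorm z) <= INR l + Cnorm z) by nra. lra.
    + assert (eps * INR l <= N) by nra.
      assert (eps * Rabs (Re z) <= Rabs (Re z)) by nra.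
      assert (eps * - Im z <= eps * (INR l / 2)) by (apply Rmult_le_compat_l; lra).
      assert (eps * Cnorm z <= eps * (Rabs (Re z) + - Im z)) by (apply Rmult_le_compat_l; lra).
      lra.
Qed.

Lemma denom_lower_bound eps l z : 0 < eps < 1 -> (1 <= l)%nat -> ~ Omega eps z ->
  eps / 4 * INR l * (INR l + Cnorm z) <= Cnorm (denom l z).
Proof.
  intros He Hl HO.
  assert (HL : 1 <= INR l) by (apply (le_INR 1); auto).
  unfold denom. rewrite Cnorm_mul, Cnorm_RtoC, Rabs_right by lra.
  replace (eps / 4 * INR l * (INR l + Cnorm z)) with (INR l * (eps / 4 * (INR l + Cnorm z))) by ring.
  apply Rmult_le_compat_l; [lra | apply denom_factor_lower_bound; auto].
Qed.

Definition lsum (f : nat -> R) (js : list nat) : R := fold_right Rplus 0 (map f js).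

Lemma Cnorm_fold_sum_le (g : nat -> Cplx) js :
  Cnorm (fold_right Cadd C0 (map g js)) <= lsum (fun j => Cnorm (g j)) js.
Proof.
  induction js; simpl; unfold lsum in *; simpl.
  - rewrite Cnorm_C0; lra.
  - eapply Rle_trans; [apply Cnorm_triangle | lra].
Qed.

Lemma lsum_le f g js : (forall j, In j js -> f j <= g j) -> lsum f js <= lsum g js.
Proof.
  induction js as [|j js IH]; intro H; unfold lsum in *; simpl; [lra|].
  apply Rplus_le_compat; [apply H; simpl; auto | apply IH; intros; apply H; simpl; auto].
Qed.

Lemma lsum_lin a b f g js : lsum (fun j => a * f j + b * g j) js = a * lsum f js + b * lsum g js.
Proof. induction js; unfold lsum in *; simpl; [ring | rewrite IHjs; ring]. Qed.

Lemma lsum_seq_succ f n : lsum f (seq 0 (S n)) = lsum f (seq 0 n) + f n.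
Proof.
  unfold lsum. rewrite seq_S, map_app, fold_right_app. simpl.
  generalize (f n). induction (map f (seq 0 n)); intros; simpl; [ring | rewrite IHl; ring].
Qed.

Lemma lsum_indicator0 n : (1 <= n)%nat -> lsum (fun j => if Nat.eqb j 0 then 1 else 0) (seq 0 n) = 1.
Proof.
  intro H. induction n as [|n IH]; [lia|]. rewrite lsum_seq_succ.
  destruct n; [unfold lsum; simpl; ring|]. rewrite IH by lia. simpl. ring.
Qed.

Lemma pow_succ_add1_ge D x : 0 <= x -> INR (S D) * x ^ D + x ^ S D <= (x + 1) ^ S D.
Proof.
  intro Hx. induction D as [|D IH]; [simpl; lra|].
  assert (0 <= x ^ D) by (apply pow_le; auto).
  assert (0 <= INR (S D)) by apply pos_INR.
  rewrite S_INR. simpl pow in *.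
  assert ((x + 1) * (INR (S D) * x ^ D + x * x ^ D) <= (x + 1) * ((x + 1) * (x + 1) ^ D))
    by (apply Rmult_le_compat_l; lra).
  nra.
Qed.

Lemma lsum_pow_le D n : lsum (fun j => INR j ^ D) (seq 0 n) <= INR n ^ S D / INR (S D).
Proof.
  assert (0 < INR (S D)) by (apply lt_0_INR; lia).
  induction n as [|n IH].
  - unfold lsum; simpl. unfold Rdiv. rewrite Rmult_0_l. lra.
  - rewrite lsum_seq_succ, S_INR.
    pose proof (pow_succ_add1_ge D (INR n) (pos_INR n)).
    apply Rle_trans with (INR n ^ S D / INR (S D) + INR n ^ D); [lra|].
    apply (Rmult_le_reg_r (INR (S D))); auto.
    unfold Rdiv. rewrite Rmult_plus_distr_r, !Rmult_assoc, Rinv_l by lra. lra.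
Qed.

Lemma Cnorm_shift_coef l h : Cnorm (shift_coef l h) = 2 * INR l * INR h.
Proof.
  unfold shift_coef. rewrite Cnorm_mul, Cnorm_RtoC, Cnorm_Ci, Rmult_1_r.
  apply Rabs_right. pose proof (pos_INR l); pose proof (pos_INR h). nra.
Qed.

Fixpoint bound_const (A eps : R) (h : nat) : R :=
  match h with
  | O => 8 * A / eps + 1
  | S h' => 16 * INR (S h') * bound_const A eps h' / eps + 1
  end.

Lemma bound_const_pos A eps h : 0 < A -> 0 < eps -> 0 < bound_const A eps h.
Proof.
  intros HA Heps. induction h as [|h IH]; cbn [bound_const].
  - assert (0 < 8 * A / eps) by (apply Rdiv_lt_0_compat; lra). lra.
  - assert (0 < INR (S h)) by (apply lt_0_INR; lia).
    assert (0 < 16 * INR (S h) * bound_const A eps h / eps)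
      by (apply Rdiv_lt_0_compat; [apply Rmult_lt_0_compat|]; lra).
    lra.
Qed.

Section Bound.
Variable om : nat -> R.
Variables A eps : R.
Hypothesis HA : 0 < A.
Hypothesis Hom : forall n, (1 <= n)%nat -> Rabs (om n) <= A * INR n.
Hypothesis Heps : 0 < eps < 1.
Variable D : nat.
Hypothesis HD1 : (1 <= D)%nat.
Hypothesis HD : 2 * A <= eps / 4 * INR (S D).

Lemma conv_sum_bound h l z C : (1 <= l)%nat -> 0 < C ->
  (forall j, (1 <= j)%nat -> (j < l)%nat ->
     Cnorm (dGamma om j h z) <= C * INR j ^ D / (1 + Cnorm z) ^ S h) ->
  Cnorm (conv_sum om l h z) <=
    A * INR l * Cnorm (dGamma om 0 h z)
    + A * INR l * (C / (1 + Cnorm z) ^ S h) * (INR l ^ S D / INR (S D)).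
Proof.
  intros Hl HC Hprev.
  set (L := INR l). set (V := (1 + Cnorm z) ^ S h) in *.
  assert (HV : 0 < V) by (unfold V; apply pow_lt; pose proof (Cnorm_ge0 z); lra).
  assert (HL : 1 <= L) by (apply (le_INR 1); auto).
  unfold conv_sum. eapply Rle_trans; [apply Cnorm_fold_sum_le|].
  eapply Rle_trans.
  - apply lsum_le with
      (g := fun j => A * L * Cnorm (dGamma om 0 h z) * (if Nat.eqb j 0 then 1 else 0)
                     + A * L * (C / V) * INR j ^ D).
    intros j Hj. apply in_seq in Hj. rewrite Cnorm_mul, Cnorm_RtoC.
    assert (Hom' : Rabs (om (l - j)%nat) <= A * L).
    { eapply Rle_trans; [apply Hom; lia|].
      apply Rmult_le_compat_l; [lra | apply le_INR; lia]. }
    pose proof (Rabs_pos (om (l - j)%nat)); pose proof (Cnorm_ge0 (dGamma om j h z)).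
    destruct j as [|j'].
    + simpl Nat.eqb. rewrite pow_i by lia. rewrite Rmult_0_r, Rmult_1_r, Rplus_0_r.
      apply Rmult_le_compat_r; auto.
    + simpl Nat.eqb. rewrite Rmult_0_r, Rplus_0_l.
      eapply Rle_trans; [apply Rmult_le_compat; eauto; apply Hprev; lia|].
      unfold Rdiv. apply Req_le. ring.
  - rewrite lsum_lin, lsum_indicator0 by auto.
    assert (0 <= A * L * (C / V)) by (apply Rmult_le_pos; [nra | apply Rlt_le, Rdiv_lt_0_compat; auto]).
    pose proof (lsum_pow_le D l).
    apply Rplus_le_compat; [lra | apply Rmult_le_compat_l; auto].
Qed.

Lemma conv_tail_absorbed L C V : 0 <= L -> 0 < C -> 0 < V ->
  A * L * (C / V) * (L ^ S D / INR (S D)) <= eps / 4 * L * L * (C * L ^ D / V) / 2.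
Proof.
  intros HL HC HV.
  assert (HSD : 0 < INR (S D)) by (apply lt_0_INR; lia).
  assert (A / INR (S D) <= eps / 8).
  { apply Rmult_le_reg_r with (INR (S D)); auto. unfold Rdiv.
    rewrite Rmult_assoc, Rinv_l by lra. lra. }
  assert (0 <= L * L * C * L ^ D / V)
    by (apply Rmult_le_pos; [repeat apply Rmult_le_pos; try apply pow_le; lra
                             | apply Rlt_le, Rinv_0_lt_compat; lra]).
  replace (A * L * (C / V) * (L ^ S D / INR (S D))) with (A / INR (S D) * (L * L * C * L ^ D / V))
    by (change (L ^ S D) with (L * L ^ D); field; lra).
  replace (eps / 4 * L * L * (C * L ^ D / V) / 2) with (eps / 8 * (L * L * C * L ^ D / V))
    by (field; lra).
  apply Rmult_le_compat_r; auto.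
Qed.

(* The sum over [j < l] is absorbed by half of [denom l z]; the remaining terms must fit
   in the other half. *)
Lemma dGamma_bound_step h l z C : (1 <= l)%nat -> ~ Omega eps z -> 0 < C ->
  (forall j, (1 <= j)%nat -> (j < l)%nat ->
     Cnorm (dGamma om j h z) <= C * INR j ^ D / (1 + Cnorm z) ^ S h) ->
  A * INR l * Cnorm (dGamma om 0 h z) + Cnorm (shift_coef l h) * Cnorm (dGamma om l (pred h) z)
    <= eps / 4 * INR l * (1 + Cnorm z) * (C * INR l ^ D / (1 + Cnorm z) ^ S h) / 2 ->
  Cnorm (dGamma om l h z) <= C * INR l ^ D / (1 + Cnorm z) ^ S h.
Proof.
  intros Hl HO HC Hprev Hrest.
  pose proof (not_Omega_off_poles eps z Heps HO) as Hz.
  pose proof (conv_sum_bound h l z C Hl HC Hprev) as Hconv.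
  pose proof (denom_lower_bound eps l z Heps Hl HO) as Hden.
  pose proof (Cnorm_ge0 z).
  assert (HL : 1 <= INR l) by (apply (le_INR 1); auto).
  set (c := eps / 4) in *. set (L := INR l) in *. set (Y := 1 + Cnorm z) in *.
  assert (HY : 1 <= Y) by (unfold Y; lra).
  set (V := Y ^ S h) in *.
  assert (HV : 0 < V) by (unfold V; apply pow_lt; lra).
  set (u := L ^ D) in *.
  assert (Hu : 1 <= u) by (unfold u; apply pow_R1_Rle; lra).
  set (T := C * u / V) in *.
  assert (HT : 0 <= T) by (unfold T; apply Rlt_le, Rdiv_lt_0_compat; nra).
  assert (Dz : denom l z <> C0) by (apply denom_neq0; auto).
  pose proof (Cnorm_gt0 _ Dz) as HDp.
  assert (Hnum : Cnorm (dGamma om l h z) * Cnorm (denom l z) <=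
                 A * L * (C / V) * (L ^ S D / INR (S D))
                 + (A * L * Cnorm (dGamma om 0 h z)
                    + Cnorm (shift_coef l h) * Cnorm (dGamma om l (pred h) z))).
  { rewrite (dGamma_recurrence om h l z Hl Hz), Cnorm_div by auto.
    replace (Cnorm _ / Cnorm (denom l z) * Cnorm (denom l z)) with
      (Cnorm (Cadd (conv_sum om l h z) (Cmul (shift_coef l h) (dGamma om l (pred h) z))))
      by (field; lra).
    eapply Rle_trans; [apply Cnorm_triangle|]. rewrite Cnorm_mul. lra. }
  pose proof (conv_tail_absorbed L C V ltac:(lra) HC HV) as Hsum. fold c u T in Hsum.
  assert (Hden' : c * L * (L + Y) / 2 <= Cnorm (denom l z)).
  { assert (c * L * (L + Y) <= c * L * (2 * (L + Cnorm z)))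
      by (apply Rmult_le_compat_l; unfold c, Y; nra).
    lra. }
  apply Rmult_le_reg_r with (Cnorm (denom l z)); auto.
  assert (c * L * (L + Y) / 2 * T <= Cnorm (denom l z) * T) by (apply Rmult_le_compat_r; lra).
  nra.
Qed.

Lemma dGamma_bound h l z : (1 <= l)%nat -> ~ Omega eps z ->
  Cnorm (dGamma om l h z) <= bound_const A eps h * INR l ^ D / (1 + Cnorm z) ^ S h.
Proof.
  revert l. induction h as [|h IHh]; intro l;
  induction l as [l IHl] using (well_founded_induction lt_wf); intros Hl HO;
  apply dGamma_bound_step; auto; try (apply bound_const_pos; lra);
  try (intros j Hj1 Hj2; apply IHl; auto);
  rewrite dGamma_0, Cnorm_shift_coef;
  assert (HL : 1 <= INR l) by (apply (le_INR 1); auto);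
  assert (Hu : 1 <= INR l ^ D) by (apply pow_R1_Rle; lra);
  pose proof (Cnorm_ge0 z).
  - change (cderivn 0 (fun _ => C1) z) with C1. rewrite Cnorm_C1. cbn [bound_const].
    replace (eps / 4 * INR l * (1 + Cnorm z) * ((8 * A / eps + 1) * INR l ^ D / (1 + Cnorm z) ^ 1) / 2)
      with ((A + eps / 8) * (INR l * INR l ^ D)) by (simpl; field; lra).
    assert (INR l <= INR l * INR l ^ D) by nra.
    change (INR 0) with 0. nra.
  - rewrite cderivn_const_succ, Cnorm_C0. simpl pred.
    pose proof (IHh l Hl HO) as Hp.
    set (Cp := bound_const A eps h) in *.
    assert (HCp : 0 < Cp) by (apply bound_const_pos; lra).
    set (Y := 1 + Cnorm z) in *. set (u := INR l ^ D) in *.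
    assert (HY : 1 <= Y) by (unfold Y; lra).
    assert (HV : 0 < Y ^ S h) by (apply pow_lt; lra).
    change (bound_const A eps (S h)) with (16 * INR (S h) * Cp / eps + 1).
    replace (eps / 4 * INR l * Y * ((16 * INR (S h) * Cp / eps + 1) * u / Y ^ S (S h)) / 2)
      with ((2 * INR (S h) * Cp + eps / 8) * (INR l * u) / Y ^ S h)
      by (change (Y ^ S (S h)) with (Y * Y ^ S h); field; lra).
    assert (0 <= INR (S h)) by apply pos_INR.
    rewrite Rmult_0_r, Rplus_0_l.
    assert (2 * INR l * INR (S h) * Cnorm (dGamma om l h z) <= 2 * INR l * INR (S h) * (Cp * u / Y ^ S h))
      by (apply Rmult_le_compat_l; nra).
    eapply Rle_trans; [eassumption|].
    unfold Rdiv. rewrite !Rmult_assoc.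
    assert (0 < / Y ^ S h) by (apply Rinv_0_lt_compat; auto).
    assert (0 <= INR l * (u * / Y ^ S h)) by (apply Rmult_le_pos; [lra | apply Rmult_le_pos; lra]).
    nra.
Qed.

End Bound.

Lemma infinite_sum_ext f g l : (forall n, f n = g n) -> infinite_sum g l -> infinite_sum f l.
Proof.
  intros E H e He. destruct (H e He) as [N HN]. exists N. intros n Hn.
  rewrite (sum_eq f g n) by (intros; apply E). auto.
Qed.

Lemma infinite_sum_lin p q f g a b : infinite_sum f a -> infinite_sum g b ->
  infinite_sum (fun n => p * f n + q * g n) (p * a + q * b).
Proof.
  intros Hf Hg.
  assert (Hconst : forall c, Un_cv (fun _ : nat => c) c).
  { intros c e He. exists 0%nat. intros. unfold Rdist. rewrite Rminus_diag, Rabs_R0. lra. }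
  assert (C : Un_cv (fun N => p * sum_f_R0 f N + q * sum_f_R0 g N) (p * a + q * b)).
  { apply CV_plus; apply (CV_mult (fun _ => _)); auto. }
  intros e He. destruct (C e He) as [N HN]. exists N. intros n Hn.
  replace (sum_f_R0 (fun n => p * f n + q * g n) n) with (p * sum_f_R0 f n + q * sum_f_R0 g n)
    by (clear; induction n as [|n IH]; simpl; [ring | rewrite <- IH; ring]).
  apply HN; auto.
Qed.

Lemma infinite_sum_terms_bounded f l : infinite_sum f l -> exists M, forall n, Rabs (f n) <= M.
Proof.
  intro H. destruct (maj_by_pos (sum_f_R0 f) (exist _ l H)) as [M [_ HM]].
  exists (2 * M). intros [|n].
  - pose proof (HM 0%nat). pose proof (Rabs_pos (f 0%nat)). simpl in *. lra.
  - replace (f (S n)) with (sum_f_R0 f (S n) - sum_f_R0 f n) by (simpl; ring).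
    eapply Rle_trans; [apply Rabs_triang|]. rewrite Rabs_Ropp.
    pose proof (HM (S n)). pose proof (HM n). lra.
Qed.

Section CoefficientUniqueness.
Variable b : nat -> R.
Hypothesis Hb0 : forall x, 0 < x < 1 -> infinite_sum (fun n => b (S n) * x ^ S n) 0.

Lemma coef_geometric_bound : exists M, 0 <= M /\ forall n, Rabs (b (S n)) <= M * 2 ^ S n.
Proof.
  destruct (infinite_sum_terms_bounded _ _ (Hb0 (/ 2) ltac:(lra))) as [M HM].
  exists M. split.
  { pose proof (HM 0%nat). pose proof (Rabs_pos (b 1%nat * (/ 2) ^ 1)). lra. }
  intro n. specialize (HM n).
  rewrite Rabs_mult, (Rabs_right ((/ 2) ^ S n)), pow_inv in HM
    by (try apply Rle_ge, pow_le; lra).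
  assert (0 < 2 ^ S n) by (apply pow_lt; lra).
  apply Rmult_le_reg_r with (/ 2 ^ S n); [apply Rinv_0_lt_compat; auto|].
  rewrite Rmult_assoc, Rinv_r by lra. lra.
Qed.

(* Once the coefficients below [N] vanish, the series at [x] is [b (S N) x^(N+1)] plus a tail
   dominated by a geometric series of ratio [2 x]. *)
Lemma leading_coef_bound M N x : 0 <= M -> (forall n, Rabs (b (S n)) <= M * 2 ^ S n) ->
  (forall i, (i < N)%nat -> b (S i) = 0) -> 0 < x < / 4 ->
  Rabs (b (S N)) * x ^ S N <= 2 * M * (2 * x) ^ S (S N).
Proof.
  intros HM Hb Hlow Hx.
  set (t := fun n => b (S n) * x ^ S n). set (q := 2 * x).
  assert (Hq : 0 < q <= / 2) by (unfold q; lra).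
  assert (Ht : forall n, Rabs (t n) <= M * q ^ S n).
  { intro n. unfold t, q.
    rewrite Rabs_mult, Rpow_mult_distr, (Rabs_right (x ^ S n)) by (apply Rle_ge, pow_le; lra).
    rewrite <- Rmult_assoc. apply Rmult_le_compat_r; [apply pow_le; lra | apply Hb]. }
  assert (Hhead : sum_f_R0 t N = t N).
  { destruct N as [|N']; [reflexivity|]. simpl. rewrite sum_eq_R0; [ring|].
    intros i Hi. unfold t. rewrite (Hlow i) by lia. ring. }
  assert (Htail : forall j, Rabs (sum_f_R0 t (N + j) - t N)
                              <= 2 * M * q ^ S (S N) - 2 * M * q ^ S (S (N + j))).
  { induction j as [|j IH].
    - rewrite Nat.add_0_r, Hhead, Rminus_diag, Rabs_R0. lra.
    - rewrite Nat.add_succ_r. simpl sum_f_R0.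
      replace (sum_f_R0 t (N + j) + t (S (N + j)) - t N)
        with ((sum_f_R0 t (N + j) - t N) + t (S (N + j))) by ring.
      eapply Rle_trans; [apply Rabs_triang|]. specialize (Ht (S (N + j))).
      assert (0 <= M * q ^ S (S (N + j))) by (apply Rmult_le_pos; auto; apply pow_le; lra).
      assert (M * q ^ S (S (S (N + j))) <= M * q ^ S (S (N + j)) / 2)
        by (change (q ^ S (S (S (N + j)))) with (q * q ^ S (S (N + j))); nra).
      lra. }
  apply Rnot_lt_le. intro Hlt.
  destruct (Hb0 x ltac:(lra) (Rabs (b (S N)) * x ^ S N - 2 * M * q ^ S (S N)) ltac:(lra)) as [K HK].
  specialize (HK (N + K)%nat ltac:(lia)). unfold Rdist in HK. rewrite Rminus_0_r in HK.
  specialize (Htail K).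
  assert (0 <= 2 * M * q ^ S (S (N + K))) by (apply Rmult_le_pos; [lra | apply pow_le; lra]).
  pose proof (Rabs_triang (t N - sum_f_R0 t (N + K)) (sum_f_R0 t (N + K))) as Htri.
  replace (t N - sum_f_R0 t (N + K) + sum_f_R0 t (N + K)) with (t N) in Htri by ring.
  rewrite Rabs_minus_sym in Htri.
  unfold t at 1 in Htri. rewrite Rabs_mult, (Rabs_right (x ^ S N)) in Htri by (apply Rle_ge, pow_le; lra).
  fold t in HK. lra.
Qed.

Lemma power_series_coef_zero N : b (S N) = 0.
Proof.
  destruct coef_geometric_bound as [M [HM Hb]].
  induction N as [N IH] using (well_founded_induction lt_wf).
  destruct (Req_dec (b (S N)) 0) as [E|E]; [exact E | exfalso].
  set (B := Rabs (b (S N))). assert (HB : 0 < B) by (apply Rabs_pos_lt; auto).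
  set (K := 2 * M * 2 ^ S (S N) * 2 + 1).
  assert (HK : 0 < K) by (unfold K; assert (0 < 2 ^ S (S N)) by (apply pow_lt; lra); nra).
  set (x := Rmin (/ 8) (B / (2 * K))).
  assert (Hx : 0 < x < / 4).
  { unfold x. split; [apply Rmin_glb_lt; [lra | apply Rdiv_lt_0_compat; lra]|].
    pose proof (Rmin_l (/ 8) (B / (2 * K))). lra. }
  pose proof (leading_coef_bound M N x HM Hb IH Hx) as Hlead. fold B in Hlead.
  rewrite Rpow_mult_distr in Hlead.
  change (x ^ S (S N)) with (x * x ^ S N) in Hlead.
  assert (0 < x ^ S N) by (apply pow_lt; lra).
  assert (B <= 2 * M * 2 ^ S (S N) * x) by (apply Rmult_le_reg_r with (x ^ S N); auto; nra).
  assert (x <= B / (2 * K)) by apply Rmin_r.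
  assert (2 * M * 2 ^ S (S N) * x <= K * x) by (unfold K; nra).
  assert (K * x <= B / 2).
  { apply Rmult_le_compat_l with (r := K) in H1; [|lra].
    replace (K * (B / (2 * K))) with (B / 2) in H1 by (field; lra). lra. }
  lra.
Qed.

End CoefficientUniqueness.

Lemma bernoulli_ineq t n : 0 <= t -> 1 + INR n * t <= (1 + t) ^ n.
Proof.
  intro Ht. induction n as [|n IH]; [simpl; lra|].
  rewrite S_INR. simpl. assert (0 <= INR n) by apply pos_INR. nra.
Qed.

Lemma INR_mul_pow_cv0 y : Rabs y < 1 -> Un_cv (fun n => INR n * y ^ n) 0.
Proof.
  intro Hy. set (q := Rabs y) in *. assert (0 <= q) by apply Rabs_pos.
  (* |y|^n <= p^n p^n with p^2 = (1 + |y|)/2, and n p^n <= 1/t by Bernoulli, where p (1 + t) = 1. *)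
  set (p := sqrt ((1 + q) / 2)).
  assert (Hp2 : p * p = (1 + q) / 2) by (unfold p; apply sqrt_sqrt; lra).
  assert (Hp0 : 0 < p) by (unfold p; apply sqrt_lt_R0; lra).
  assert (Hp1 : p < 1) by nra.
  set (t := / p - 1).
  assert (Ht : 0 < t).
  { unfold t. assert (1 < / p) by (rewrite <- Rinv_1; apply Rinv_lt_contravar; lra). lra. }
  assert (Hb : forall n, INR n * p ^ n <= / t).
  { intro n. pose proof (bernoulli_ineq t n (Rlt_le _ _ Ht)).
    assert (p * (1 + t) = 1) by (unfold t; field; lra).
    assert (p ^ n * (1 + t) ^ n = 1) by (rewrite <- Rpow_mult_distr, H1; apply pow1).
    assert (0 < p ^ n) by (apply pow_lt; lra).
    assert (INR n * t * p ^ n <= 1) by nra.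
    apply Rmult_le_reg_r with t; auto. rewrite Rinv_l by lra. nra. }
  intros e He.
  destruct (pow_lt_1_zero p ltac:(rewrite Rabs_right; lra) (e * t)) as [N HN];
    [apply Rmult_lt_0_compat; lra|].
  exists N. intros n Hn. unfold Rdist. rewrite Rminus_0_r.
  specialize (HN n Hn). rewrite Rabs_right in HN by (apply Rle_ge, pow_le; lra).
  rewrite Rabs_mult, Rabs_right by (apply Rle_ge, pos_INR). rewrite <- RPow_abs. fold q.
  assert (q ^ n <= p ^ n * p ^ n) by (rewrite <- Rpow_mult_distr; apply pow_incr; split; nra).
  assert (0 <= INR n) by apply pos_INR.
  assert (INR n * q ^ n <= INR n * p ^ n * p ^ n) by nra.
  assert (INR n * p ^ n * p ^ n <= / t * p ^ n)
    by (apply Rmult_le_compat_r; [apply pow_le; lra | apply Hb]).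
  assert (/ t * p ^ n < e).
  { apply Rmult_lt_reg_l with t; auto. rewrite <- Rmult_assoc, Rinv_r by lra. lra. }
  lra.
Qed.

Lemma sum_INR_mul_pow y N : y <> 1 ->
  sum_f_R0 (fun n => INR (S n) * y ^ S n) N =
  (y - INR (N + 2) * y ^ (N + 2) + INR (N + 1) * y ^ (N + 3)) / ((1 - y) * (1 - y)).
Proof.
  intro Hy. assert (1 - y <> 0) by lra.
  induction N as [|N IH].
  - simpl. field. auto.
  - rewrite (tech5 (fun n => INR (S n) * y ^ S n) N), IH. cbv beta.
    replace (S N + 2)%nat with (S (N + 2)) by lia.
    replace (S N + 3)%nat with (S (N + 3)) by lia.
    replace (S N + 1)%nat with (S (N + 1)) by lia.
    replace (N + 3)%nat with (S (N + 2)) by lia.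
    replace (N + 2)%nat with (S (N + 1)) by lia.
    replace (N + 1)%nat with (S N) by lia. rewrite !S_INR. simpl pow. field. auto.
Qed.

Lemma infinite_sum_INR_mul_pow y : Rabs y < 1 ->
  infinite_sum (fun n => INR (S n) * y ^ S n) (y / ((1 - y) * (1 - y))).
Proof.
  intro Hy. assert (y <> 1) by (intro E; subst; rewrite Rabs_R1 in Hy; lra).
  assert (1 - y <> 0) by lra.
  pose proof (INR_mul_pow_cv0 y Hy) as C.
  assert (Hconst : Un_cv (fun _ : nat => y) y).
  { intros e He. exists 0%nat. intros. unfold Rdist. rewrite Rminus_diag, Rabs_R0. lra. }
  assert (Hinv : Un_cv (fun _ : nat => / ((1 - y) * (1 - y))) (/ ((1 - y) * (1 - y)))).
  { intros e He. exists 0%nat. intros. unfold Rdist. rewrite Rminus_diag, Rabs_R0. lra. }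
  assert (C2 : Un_cv (fun N => INR (N + 2) * y ^ (N + 2)) 0).
  { intros e He. destruct (C e He) as [K HK]. exists K. intros n Hn. apply HK. lia. }
  assert (C3 : Un_cv (fun N => INR (N + 1) * y ^ (N + 3)) 0).
  { intros e He. destruct (C e He) as [K HK]. exists K. intros n Hn.
    specialize (HK (n + 1)%nat ltac:(lia)). unfold Rdist in *. rewrite Rminus_0_r in *.
    replace (INR (n + 1) * y ^ (n + 3)) with (y * y * (INR (n + 1) * y ^ (n + 1)))
      by (replace (n + 3)%nat with (S (S (n + 1))) by lia; simpl; ring).
    rewrite Rabs_mult. assert (Rabs (y * y) <= 1) by (rewrite Rabs_mult; pose proof (Rabs_pos y); nra).
    pose proof (Rabs_pos (INR (n + 1) * y ^ (n + 1))). nra. }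
  assert (Cx : Un_cv (fun N => (y - INR (N + 2) * y ^ (N + 2) + INR (N + 1) * y ^ (N + 3))
                              * / ((1 - y) * (1 - y)))
                     ((y - 0 + 0) * / ((1 - y) * (1 - y)))).
  { apply CV_mult; [apply CV_plus; [apply CV_minus|]|]; auto. }
  replace (y - 0 + 0) with y in Cx by ring.
  intros e He. destruct (Cx e He) as [K HK]. exists K. intros n Hn.
  rewrite sum_INR_mul_pow by auto. apply HK; auto.
Qed.

Lemma exp_INR_mul n r : exp (INR n * r) = exp r ^ n.
Proof.
  induction n as [|n IH]; [simpl; rewrite Rmult_0_l; apply exp_0|].
  rewrite S_INR, Rmult_plus_distr_r, Rmult_1_l, exp_plus, IH. simpl. ring.
Qed.

Section OmegaExpansion.
Variables m k : nat.

Let alpha := INR m / 2 * (Qdim m k - 1).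
Let gam := INR k / 2 * (INR k / 2 - 1).

(* From 1/(4 sinh^2(r/2)) = sum_n n e^(-n r) and 1/sinh^2 r = 4 sum_n n e^(-2 n r). *)
Definition omega_coef (n : nat) : R := (alpha + gam) * INR n + gam * INR n * (-1) ^ n.

Lemma omega_fun_rational r : 0 < r ->
  omega_fun m k r =
  (alpha + gam) * (exp (- r) / ((1 - exp (- r)) * (1 - exp (- r))))
  + gam * (- exp (- r) / ((1 - - exp (- r)) * (1 - - exp (- r)))).
Proof.
  intro Hr. unfold omega_fun. fold alpha gam.
  set (u := exp (- (r / 2))).
  assert (Hu0 : 0 < u) by apply exp_pos.
  assert (Hu1 : u < 1) by (unfold u; rewrite <- exp_0; apply exp_increasing; lra).
  assert (E1 : exp (- r) = u * u) by (unfold u; rewrite <- exp_plus; f_equal; lra).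
  assert (E2 : exp (r / 2) = / u) by (unfold u; rewrite exp_Ropp, Rinv_inv; auto).
  assert (E3 : exp r = / (u * u)) by (rewrite <- E1, exp_Ropp, Rinv_inv; auto).
  unfold sinh. rewrite E1, E2, E3. fold u.
  assert (u * u < 1) by nra.
  assert (u * u * (u * u) < 1) by nra.
  unfold alpha. field. repeat split; nra.
Qed.

Lemma omega_coef_series x : 0 < x < 1 ->
  infinite_sum (fun n => omega_coef (S n) * x ^ S n)
    ((alpha + gam) * (x / ((1 - x) * (1 - x))) + gam * (- x / ((1 - - x) * (1 - - x)))).
Proof.
  intro Hx.
  apply infinite_sum_ext with
    (fun n => (alpha + gam) * (INR (S n) * x ^ S n) + gam * (INR (S n) * (- x) ^ S n)).
  { intro n. unfold omega_coef. replace (- x) with (-1 * x) by ring. rewrite Rpow_mult_distr. ring. }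
  apply infinite_sum_lin; apply infinite_sum_INR_mul_pow;
    [rewrite Rabs_right | rewrite Rabs_Ropp, Rabs_right]; lra.
Qed.

Lemma expansion_coef_eq om : is_expansion m k om -> forall n, om (S n) = omega_coef (S n).
Proof.
  intro He.
  enough (H : forall n, om (S n) - omega_coef (S n) = 0) by (intro n; specialize (H n); lra).
  apply (power_series_coef_zero (fun n => om n - omega_coef n)).
  intros x Hx. set (r := - ln x).
  assert (Hr : 0 < r) by (unfold r; assert (ln x < 0) by (rewrite <- ln_1; apply ln_increasing; lra); lra).
  assert (Ex : exp (- r) = x) by (unfold r; rewrite Ropp_involutive; apply exp_ln; lra).
  assert (Hom : infinite_sum (fun n => om (S n) * x ^ S n) (omega_fun m k r)).
  { apply infinite_sum_ext with (fun n => om (S n) * exp (- INR (S n) * r)); [|exact (He r Hr)].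
    intro n. rewrite <- Ex, <- exp_INR_mul. do 2 f_equal. ring. }
  pose proof (infinite_sum_lin 1 (-1) _ _ _ _ Hom (omega_coef_series x Hx)) as Hdiff.
  rewrite omega_fun_rational, Ex in Hdiff by auto.
  replace 0 with (1 * ((alpha + gam) * (x / ((1 - x) * (1 - x))) + gam * (- x / ((1 - - x) * (1 - - x))))
                  + -1 * ((alpha + gam) * (x / ((1 - x) * (1 - x))) + gam * (- x / ((1 - - x) * (1 - - x)))))
    by ring.
  apply infinite_sum_ext with (2 := Hdiff). intro n. ring.
Qed.

Lemma expansion_coef_bound om : is_expansion m k om ->
  exists A, 0 < A /\ forall n, (1 <= n)%nat -> Rabs (om n) <= A * INR n.
Proof.
  intro He. exists (Rabs (alpha + gam) + Rabs gam + 1). split.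
  { pose proof (Rabs_pos (alpha + gam)). pose proof (Rabs_pos gam). lra. }
  intros [|n] Hn; [lia|]. rewrite (expansion_coef_eq om He).
  unfold omega_coef. eapply Rle_trans; [apply Rabs_triang|].
  rewrite !Rabs_mult, pow_1_abs, (Rabs_right (INR (S n))) by (apply Rle_ge, pos_INR).
  pose proof (pos_INR (S n)). pose proof (Rabs_pos (alpha + gam)). pose proof (Rabs_pos gam). nra.
Qed.

End OmegaExpansion.

Theorem lemma2p1 (m k : nat) (om : nat -> R) (eps : R) :
  (2 <= m)%nat -> Nat.Even m -> (1 <= k)%nat ->
  is_expansion m k om ->
  0 < eps < 1 ->
  exists d : R, 0 < d /\
    forall h : nat, exists Cst : R, 0 < Cst /\
      forall (l : nat) (lam : Cplx), (1 <= l)%nat -> ~ Omega eps lam ->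
        Cnorm (cderivn h (Gamma om l) lam)
          <= Cst * Rpower (INR l) d * / (1 + Cnorm lam) ^ (h + 1).
Proof.
  intros _ _ _ Hexp Heps.
  destruct (expansion_coef_bound m k om Hexp) as [A [HA Hom]].
  destruct (INR_unbounded (8 * A / eps)) as [N HN].
  assert (HD : 2 * A <= eps / 4 * INR (S (S N))).
  { rewrite !S_INR. assert (8 * A / eps * eps = 8 * A) by (field; lra).
    pose proof (pos_INR N). nra. }
  exists (INR (S N)). split; [apply lt_0_INR; lia|].
  intro h. exists (bound_const A eps h). split; [apply bound_const_pos; lra|].
  intros l lam Hl HO.
  rewrite Rpower_pow, Nat.add_1_r by (apply lt_0_INR; lia).
  exact (dGamma_bound om A eps HA Hom Heps (S N) ltac:(lia) HD h l lam Hl HO).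
Qed.
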